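(* The language $4\mathrm{MIX}=\{w\in\{a,b,c,d\}^*\mid |w|_a=|w|_b=|w|_c=|w|_d\}$ is not generated by any $1$-DCFG.
   Context: Let $\Sigma$ be a finite alphabet and $1\notin\Sigma$ a separator; $\Sigma_1=\Sigma\cup\{1\}$, $\mathrm{rk}(w)=|w|_1$. For $\mathrm{rk}(u)\ge j$, $u\odot_j v$ is obtained from $u$ by replacing its $j$-th occurrence of $1$ by $v$. Given a finite set $N$ of nonterminals with ranks in $\{0,1\}$, $1$-correct terms are built from nonterminals (their rank), words of $\Sigma^*$ (rank $0$), and $1$ (rank $1$) by $(\alpha\cdot\beta)$ (allowed if $\mathrm{rk}\alpha+\mathrm{rk}\beta\le 1$; rank the sum) and $(\alpha\odot_1\beta)$ (allowed if $\mathrm{rk}\alpha\ge1$, $\mathrm{rk}\alpha+\mathrm{rk}\beta\le 2$; rank $\mathrm{rk}\alpha+\mathrm{rk}\beta-1$). Ground terms (no nonterminals) have values in $\Sigma_1^*$ by interpreting $\cdot$ as concatenation and $\odot_1$ as intercalation. A $1$-DCFG $G=\langle N,\Sigma,P,S\rangle$ has $\mathrm{rk}(S)=0$ and finitely many rules $A\to\alpha$ with $\alpha$ a $1$-correct term of rank $\mathrm{rk}(A)$; derivability $\vdash_G$ is the least reflexive transitive relation such that $A\vdash_G C[B]$ and $(B\to\beta)\in P$ imply $A\vdash_G C[\beta]$ for every context $C$ (term with a single variable leaf); $L(G)$ is the set of values of ground terms $\alpha$ with $S\vdash_G\alpha$. *)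

From mathcomp Require Import all_boot.
From Stdlib Require Import Relations.
From Stdlib Require List.
Set Implicit Arguments. Unset Strict Implicit. Unset Printing Implicit Defensive.

(* Letters of Sigma_1 = Sigma ∪ {1}: [Some a] is the letter a, [None] is the separator 1. *)
Definition letter1 (Sigma : Type) := option Sigma.

Fixpoint intercal1 (Sigma : Type) (u v : seq (letter1 Sigma)) : seq (letter1 Sigma) :=
  match u with
  | [::] => [::]
  | None :: u' => v ++ u'
  | Some a :: u' => Some a :: intercal1 u' v
  end.

Inductive term (N Sigma : Type) :=
| TNT : N -> term N Sigma
| TWord : seq Sigma -> term N Sigma
| TOne : term N Sigma
| TCat : term N Sigma -> term N Sigma -> term N Sigma
| TIns : term N Sigma -> term N Sigma -> term N Sigma.

Arguments TNT {N Sigma}.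
Arguments TWord {N Sigma}.
Arguments TOne {N Sigma}.
Arguments TCat {N Sigma}.
Arguments TIns {N Sigma}.

Section Terms.
Variables (N Sigma : Type) (rkN : N -> nat).

Fixpoint trank (t : term N Sigma) : nat :=
  match t with
  | TNT A => rkN A
  | TWord _ => 0
  | TOne => 1
  | TCat a b => trank a + trank b
  | TIns a b => trank a + trank b - 1
  end.

Fixpoint correct1 (t : term N Sigma) : bool :=
  match t with
  | TNT A => rkN A <= 1
  | TWord _ => true
  | TOne => true
  | TCat a b => [&& correct1 a, correct1 b & trank a + trank b <= 1]
  | TIns a b => [&& correct1 a, correct1 b, 1 <= trank a & trank a + trank b <= 2]
  end.

Fixpoint ground (t : term N Sigma) : bool :=
  match t with
  | TNT _ => false
  | TWord _ | TOne => true
  | TCat a b | TIns a b => ground a && ground b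
  end.

(* value of a term (meaningful for ground terms) *)
Fixpoint tvalue (t : term N Sigma) : seq (letter1 Sigma) :=
  match t with
  | TNT _ => [::]
  | TWord w => map Some w
  | TOne => [:: None]
  | TCat a b => tvalue a ++ tvalue b
  | TIns a b => intercal1 (tvalue a) (tvalue b)
  end.

End Terms.

Record dcfg1 (Sigma : Type) := Dcfg1 {
  nt : finType;
  nt_rank : nt -> nat;
  nt_rank_le1 : forall A, nt_rank A <= 1;
  rules : seq (nt * term nt Sigma);
  start : nt;
  start_rank : nt_rank start = 0;
  rules_ok : all (fun r => correct1 nt_rank r.2 && (trank nt_rank r.2 == nt_rank r.1)) rules
}.

Section Derivation.
Variables (Sigma : Type) (G : dcfg1 Sigma).

Inductive step : term (nt G) Sigma -> term (nt G) Sigma -> Prop :=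
| step_rule B beta : List.In (B, beta) (rules G) -> step (TNT B) beta
| step_catl a a' b : step a a' -> step (TCat a b) (TCat a' b)
| step_catr a b b' : step b b' -> step (TCat a b) (TCat a b')
| step_insl a a' b : step a a' -> step (TIns a b) (TIns a' b)
| step_insr a b b' : step b b' -> step (TIns a b) (TIns a b').

Definition derives (A : nt G) (alpha : term (nt G) Sigma) : Prop :=
  clos_refl_trans _ step (TNT A) alpha.

Definition lang (w : seq (letter1 Sigma)) : Prop :=
  exists alpha, derives (start G) alpha /\ ground alpha /\ tvalue alpha = w.

End Derivation.

Inductive abcd := La | Lb | Lc | Ld.

Definition count_letter (x : abcd) (w : seq abcd) : nat :=
  count (fun y => match x, y with
                  | La, La | Lb, Lb | Lc, Lc | Ld, Ld => true
                  | _, _ => false end) w.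

Definition fourMIX (w : seq abcd) : Prop :=
  count_letter La w = count_letter Lb w /\
  count_letter Lb w = count_letter Lc w /\
  count_letter Lc w = count_letter Ld w.

From HB Require Import structures.
From mathcomp Require Import all_boot zify.
From Stdlib Require Import Relations Classical.
Set Implicit Arguments. Unset Strict Implicit. Unset Printing Implicit Defensive.

(* Suppose a 1-DCFG G generates 4MIX. Two derivation trees of the same
   nonterminal B, each occurring inside a derivation of some word of 4MIX, can
   be swapped; since both resulting words are balanced, the letter-count
   differences of the words derived from B do not depend on the tree. As there
   are finitely many nonterminals, these differences are bounded by some K.
   Now derive w = a^n b^3n a^n c^3n a^n d^3n for n large and pick a subtree
   whose yield has length in (4K, n). Because every nonterminal has rank at
   most 1, that yield consists of at most two factors of w, each shorter
   than n, so each contains at most one of the letters b, c, d; hence some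
   letter among b, c, d is missing from the yield, and then every letter
   occurs at most K times in it, contradicting its length > 4K. *)

Lemma In_all (T : Type) (P : pred T) s x : all P s -> List.In x s -> P x.
Proof. by elim: s => //= y s IH /andP [Py Ps] [<- | /IH]; auto. Qed.

Lemma In_le_sumn (T : Type) (f : T -> nat) s x : List.In x s -> f x <= sumn (map f s).
Proof.
elim: s => //= y s IH [<- | /IH fx_le]; first exact: leq_addr.
exact: leq_trans fx_le (leq_addl _ _).
Qed.

Lemma uniform_bound (T : finType) (P : T -> nat -> Prop) :
  (forall x k k', k <= k' -> P x k -> P x k') -> (forall x, exists k, P x k) ->
  exists K, forall x, P x K.
Proof.
move=> P_mono P_ex.
suff [K HK] : exists K, forall x, x \in enum T -> P x K.
  by exists K => x; apply: HK; rewrite mem_enum.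
elim: (enum T) => [|y s [K HK]]; first by exists 0.
have [k Hk] := P_ex y; exists (maxn k K) => x; rewrite in_cons => /predU1P [-> | /HK].
- exact: P_mono (leq_maxl _ _) Hk.
- exact: P_mono (leq_maxr _ _).
Qed.

Section Intercalation.
Variable Sigma : Type.
Implicit Types (s u v : seq (letter1 Sigma)) (P : pred (letter1 Sigma)).

Definition is_sep (o : letter1 Sigma) : bool := ~~ isSome o.
Definition wrank s := count is_sep s.
Definition wlen s := count isSome s.

Lemma split_first_sep s : has is_sep s ->
  exists s1 s2, s = s1 ++ None :: s2 /\ ~~ has is_sep s1.
Proof.
elim: s => [|[x|] s IH] //=; last by move=> _; exists [::], s.
by move=> /IH [s1 [s2 [-> s1_free]]]; exists (Some x :: s1), s2.
Qed.

Lemma intercal1_sepfree u v : ~~ has is_sep u -> intercal1 u v = u.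
Proof. by elim: u => [|[x|] u IH] //= u_free; rewrite IH. Qed.

Lemma intercal1_split u1 u2 v : ~~ has is_sep u1 ->
  intercal1 (u1 ++ None :: u2) v = u1 ++ v ++ u2.
Proof. by elim: u1 => [|[x|] u1 IH] //= u1_free; rewrite IH. Qed.

Lemma intercal1_cat u1 u2 v : intercal1 (u1 ++ u2) v =
  if has is_sep u1 then intercal1 u1 v ++ u2 else u1 ++ intercal1 u2 v.
Proof. by elim: u1 => [|[x|] u1 IH] //=; rewrite ?IH ?catA //; case: ifP. Qed.

Lemma count_intercal1 P u v : ~~ P None -> has is_sep u ->
  count P (intercal1 u v) = count P u + count P v.
Proof.
move=> PN /split_first_sep [u1 [u2 [-> u1_free]]].
rewrite intercal1_split // !count_cat /= (negbTE PN); lia.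
Qed.

Lemma count_intercal1_le P u v : ~~ P None ->
  count P (intercal1 u v) <= count P u + count P v.
Proof.
move=> PN; have [u_sep | u_free] := boolP (has is_sep u).
  by rewrite count_intercal1.
by rewrite intercal1_sepfree ?leq_addr.
Qed.

Lemma wrank_intercal1 u v : has is_sep u ->
  wrank (intercal1 u v) = (wrank u + wrank v).-1.
Proof.
move=> /split_first_sep [u1 [u2 [-> u1_free]]].
rewrite /wrank intercal1_split // !count_cat /=.
by move: u1_free; rewrite has_count -leqNgt leqn0 => /eqP ->; lia.
Qed.

Lemma wlen_sepfree s : ~~ has is_sep s -> wlen s = size s.
Proof. by elim: s => [|[x|] s IH] //= s_free; rewrite IH. Qed.

Lemma wlen_map_Some (w : seq Sigma) : wlen (map Some w) = size w.
Proof. by rewrite wlen_sepfree ?size_map // has_map; elim: w. Qed.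

End Intercalation.

Arguments is_sep {Sigma} o.

Section DerivationTrees.
Variables (Sigma : Type) (G : dcfg1 Sigma).
Local Notation tm := (term (nt G) Sigma).
Local Notation rk := (@nt_rank Sigma G).
Local Notation derivable := (clos_refl_trans _ (@step Sigma G)).
Implicit Types (a b g : tm) (B : nt G).

Inductive expands : tm -> tm -> Prop :=
| expands_rule B beta g : List.In (B, beta) (rules G) -> expands beta g -> expands (TNT B) g
| expands_word w : expands (TWord w) (TWord w)
| expands_one : expands TOne TOne
| expands_cat a b a' b' : expands a a' -> expands b b' -> expands (TCat a b) (TCat a' b')
| expands_ins a b a' b' : expands a a' -> expands b b' -> expands (TIns a b) (TIns a' b').

Lemma expands_ground b g : expands b g -> ground g.
Proof. by elim=> //= ? ? ? ? _ -> _ ->. Qed.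

Lemma expands_refl g : ground g -> expands g g.
Proof.
elim: g => //= [w _|_|a IHa b IHb|a IHa b IHb].
- exact: expands_word.
- exact: expands_one.
- by case/andP=> /IHa ? /IHb ?; constructor.
- by case/andP=> /IHa ? /IHb ?; constructor.
Qed.

Lemma expands_step b b' g : step b b' -> expands b' g -> expands b g.
Proof.
move=> Hstep; elim: Hstep g => {b b'} [B beta Hin | a a' c _ IH | a c c' _ IH | a a' c _ IH | a c c' _ IH] g Hexp.
  exact: expands_rule Hin Hexp.
all: by inversion Hexp; subst; constructor; auto.
Qed.

Lemma expands_of_derivable b g : derivable b g -> ground g -> expands b g.
Proof.
move=> Hder; elim: (clos_rt_rt1n _ _ _ _ Hder) => {b g Hder} [g|b b' g Hstep _ IH] g_gr.
  exact: expands_refl.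
exact: expands_step Hstep (IH g_gr).
Qed.

Lemma derivable_congr (f : tm -> tm) : (forall a b, step a b -> step (f a) (f b)) ->
  forall a b, derivable a b -> derivable (f a) (f b).
Proof.
move=> f_step a b; elim=> [x y /f_step| x | x y z _ IHxy _ IHyz].
- exact: rt_step.
- exact: rt_refl.
- exact: rt_trans IHxy IHyz.
Qed.

Lemma derivable_of_expands b g : expands b g -> derivable b g.
Proof.
elim=> [B beta g' Hin _ IH| w | | a b' a' b'' _ IHa _ IHb | a b' a' b'' _ IHa _ IHb].
- exact: rt_trans (rt_step _ _ _ _ (step_rule Hin)) IH.
- exact: rt_refl.
- exact: rt_refl.
- apply: rt_trans.
    exact: (derivable_congr (fun x y => step_catl b' (a:=x) (a':=y))) IHa.
  exact: (derivable_congr (fun x y => step_catr a' (b:=x) (b':=y))) IHb.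
- apply: rt_trans.
    exact: (derivable_congr (fun x y => step_insl b' (a:=x) (a':=y))) IHa.
  exact: (derivable_congr (fun x y => step_insr a' (b:=x) (b':=y))) IHb.
Qed.

Lemma rule_correct B beta : List.In (B, beta) (rules G) ->
  correct1 rk beta /\ trank rk beta = rk B.
Proof. by move=> /(In_all (rules_ok G)) /= /andP [? /eqP]. Qed.

Lemma correct1_TNT B : correct1 rk (TNT B : tm).
Proof. exact: nt_rank_le1. Qed.

Lemma wrank_expands b g : expands b g -> correct1 rk b -> wrank (tvalue g) = trank rk b.
Proof.
elim=> /= [B beta g' Hin _ IH | w | | a b' a' b'' _ IHa _ IHb | a b' a' b'' _ IHa _ IHb].
- by have [beta_ok <-] := rule_correct Hin; move=> _; apply: IH.
- by move=> _; rewrite /wrank count_map; elim: w.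
- by [].
- by case/and3P=> /IHa <- /IHb <- _; rewrite /wrank count_cat.
- case/and4P=> /IHa ra /IHb rb rk_a _.
  have a'_sep : has is_sep (tvalue a') by rewrite has_count -/(wrank _) ra.
  by rewrite wrank_intercal1 // ra rb; lia.
Qed.

Lemma has_sep_expands a g : expands a g -> correct1 rk a -> 1 <= trank rk a ->
  has is_sep (tvalue g).
Proof. by move=> Hexp a_ok; rewrite has_count -/(wrank _) (wrank_expands Hexp a_ok). Qed.

(* [subtree b g B g1]: a derivation tree for [b] with yield [g] containing a
   subtree for the nonterminal [B] with yield [g1]. *)
Inductive subtree : tm -> tm -> nt G -> tm -> Prop :=
| subtree_here B g : expands (TNT B) g -> subtree (TNT B) g B g
| subtree_rule B' beta g B g1 : List.In (B', beta) (rules G) -> subtree beta g B g1 ->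
    subtree (TNT B') g B g1
| subtree_catl a b a' b' B g1 : subtree a a' B g1 -> expands b b' ->
    subtree (TCat a b) (TCat a' b') B g1
| subtree_catr a b a' b' B g1 : expands a a' -> subtree b b' B g1 ->
    subtree (TCat a b) (TCat a' b') B g1
| subtree_insl a b a' b' B g1 : subtree a a' B g1 -> expands b b' ->
    subtree (TIns a b) (TIns a' b') B g1
| subtree_insr a b a' b' B g1 : expands a a' -> subtree b b' B g1 ->
    subtree (TIns a b) (TIns a' b') B g1.

Lemma subtree_expands b g B g1 : subtree b g B g1 -> expands b g /\ expands (TNT B) g1.
Proof.
elim=> {b g B g1} [// | B' beta g B g1 ? _ [? ?] | a b a' b' B g1 _ [? ?] ?
  | a b a' b' B g1 ? _ [? ?] | a b a' b' B g1 _ [? ?] ? | a b a' b' B g1 ? _ [? ?]];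
  by split => //; econstructor; eauto.
Qed.

(* Since [rk B <= 1], the yield of the subtree is [u] or [u 1 v], and the word
   [q] later intercalated into that separator splits it in the whole yield. *)
Lemma subtree_factor b g B g1 : subtree b g B g1 -> correct1 rk b ->
  exists u v p q r, (tvalue g1 = u ++ v \/ tvalue g1 = u ++ None :: v) /\
    ~~ has is_sep u /\ ~~ has is_sep v /\ tvalue g = p ++ u ++ q ++ v ++ r.
Proof.
elim=> {b g B g1} /=.
- move=> B g Hexp B_ok; have rk_g := wrank_expands Hexp B_ok.
  have [g_sep | g_free] := boolP (has is_sep (tvalue g)); last first.
    by exists (tvalue g), [::], [::], [::], [::]; rewrite /= !cats0; split => //; left.
  have [s1 [s2 [g_eq s1_free]]] := split_first_sep g_sep.
  have s2_free : ~~ has is_sep s2.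
    move: rk_g B_ok s1_free; rewrite g_eq /wrank count_cat /= !has_count; lia.
  by exists s1, s2, [::], [:: None], [::]; rewrite g_eq cats0; split => //; right.
- by move=> B' beta g B g1 /rule_correct [beta_ok _] _ IH _; apply: IH.
- move=> a b a' b' B g1 _ IH _ /and3P [/IH [u [v [p [q [r [? [? [? ->]]]]]]]] _ _].
  by exists u, v, p, q, (r ++ tvalue b'); rewrite !catA.
- move=> a b a' b' B g1 _ _ IH /and3P [_ /IH [u [v [p [q [r [? [? [? ->]]]]]]]] _].
  by exists u, v, (tvalue a' ++ p), q, r; rewrite !catA.
- move=> a b a' b' B g1 _ IH _ /and4P [/IH [u [v [p [q [r [? [u_free [v_free ->]]]]]]]] _ _ _].
  rewrite !intercal1_cat (negbTE u_free) (negbTE v_free).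
  case: ifP => _; first by exists u, v, (intercal1 p (tvalue b')), q, r.
  case: ifP => _; first by exists u, v, p, (intercal1 q (tvalue b')), r.
  by exists u, v, p, q, (intercal1 r (tvalue b')).
- move=> a b a' b' B g1 Hexp _ IH /and4P [a_ok /IH [u [v [p [q [r [? [? [? ->]]]]]]]] rk_a _].
  have [a1 [a2 [-> a1_free]]] := split_first_sep (has_sep_expands Hexp a_ok rk_a).
  by exists u, v, (a1 ++ p), q, (r ++ a2); rewrite intercal1_split // !catA.
Qed.

Lemma subtree_swap b g B g1 g2 : subtree b g B g1 -> correct1 rk b -> expands (TNT B) g2 ->
  exists2 g', expands b g' & forall P, ~~ P None ->
    count P (tvalue g') + count P (tvalue g1) = count P (tvalue g) + count P (tvalue g2).
Proof.
move=> Hsub; elim: Hsub g2 => {b g B g1} /=.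
- by move=> B g _ g2 _ Hexp; exists g2 => // P _; rewrite addnC.
- move=> B' beta g B g1 Hin _ IH g2 _ /(IH _ (proj1 (rule_correct Hin))) [g' ? ?].
  by exists g' => //; econstructor; eauto.
- move=> a b a' b' B g1 _ IH ? g2 /and3P [a_ok _ _] /(IH _ a_ok) [g' ? Hcount].
  exists (TCat g' b') => [|P PN /=]; first by constructor.
  by rewrite !count_cat; have := Hcount P PN; lia.
- move=> a b a' b' B g1 ? _ IH g2 /and3P [_ b_ok _] /(IH _ b_ok) [g' ? Hcount].
  exists (TCat a' g') => [|P PN /=]; first by constructor.
  by rewrite !count_cat; have := Hcount P PN; lia.
- move=> a b a' b' B g1 Hsub IH ? g2 /and4P [a_ok _ rk_a _] /(IH _ a_ok) [g' Hexp Hcount].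
  exists (TIns g' b') => [|P PN /=]; first by constructor.
  have a'_sep := has_sep_expands (proj1 (subtree_expands Hsub)) a_ok rk_a.
  have g'_sep := has_sep_expands Hexp a_ok rk_a.
  by rewrite !count_intercal1 // addnAC Hcount // addnAC.
- move=> a b a' b' B g1 Hexp _ IH g2 /and4P [a_ok b_ok rk_a _] /(IH _ b_ok) [g' ? Hcount].
  exists (TIns a' g') => [|P PN /=]; first by constructor.
  have a'_sep := has_sep_expands Hexp a_ok rk_a.
  by rewrite !count_intercal1 // -addnA Hcount // addnA.
Qed.

Fixpoint tword_size (t : tm) : nat :=
  match t with
  | TWord w => size w
  | TCat a b | TIns a b => tword_size a + tword_size b
  | _ => 0
  end.

Fixpoint tnt_count (t : tm) : nat :=
  match t with
  | TNT _ => 1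
  | TCat a b | TIns a b => tnt_count a + tnt_count b
  | _ => 0
  end.

Definition rules_word_size := sumn [seq tword_size r.2 | r <- rules G].
Definition rules_nt_count := sumn [seq tnt_count r.2 | r <- rules G].

(* Descend into the subtree carrying a long part of the yield as long as it
   is longer than the bound; one rule application adds at most
   [rules_word_size] letters around at most [rules_nt_count] subtrees. *)
Lemma subtree_window T b g : expands b g -> tword_size b + tnt_count b * T < wlen (tvalue g) ->
  exists B g1, subtree b g B g1 /\ T < wlen (tvalue g1) <= rules_word_size + rules_nt_count * T.
Proof.
elim=> {b g} /= [B beta g Hin Hexp IH | w | | a b a' b' Ha IHa Hb IHb
  | a b a' b' Ha IHa Hb IHb] long.
- have [short | g_long] := leqP (wlen (tvalue g)) (rules_word_size + rules_nt_count * T).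
    exists B, g; split; first exact/subtree_here/(expands_rule Hin).
    by rewrite short andbT; lia.
  have ws := In_le_sumn (fun r => tword_size r.2) Hin.
  have ns := In_le_sumn (fun r => tnt_count r.2) Hin.
  have nsT : tnt_count beta * T <= rules_nt_count * T by exact: leq_mul.
  have [|B1 [g1 [Hsub bounds]]] := IH; first by rewrite /= -/rules_word_size in ws; lia.
  by exists B1, g1; split => //; apply: subtree_rule Hsub.
- by move: long; rewrite wlen_map_Some; lia.
- by [].
- move: long; rewrite /wlen count_cat -!/(wlen _) mulnDl => long.
  have [/IHa | /IHb] : tword_size a + tnt_count a * T < wlen (tvalue a') \/
      tword_size b + tnt_count b * T < wlen (tvalue b') by lia.
  + by move=> [B1 [g1 [Hsub ?]]]; exists B1, g1; split => //; apply: subtree_catl Hsub Hb.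
  + by move=> [B1 [g1 [Hsub ?]]]; exists B1, g1; split => //; apply: subtree_catr Ha Hsub.
- have := count_intercal1_le (P := isSome) (tvalue a') (tvalue b') isT.
  move: long; rewrite mulnDl -!/(wlen _) => long ins_le.
  have [/IHa | /IHb] : tword_size a + tnt_count a * T < wlen (tvalue a') \/
      tword_size b + tnt_count b * T < wlen (tvalue b') by lia.
  + by move=> [B1 [g1 [Hsub ?]]]; exists B1, g1; split => //; apply: subtree_insl Hsub Hb.
  + by move=> [B1 [g1 [Hsub ?]]]; exists B1, g1; split => //; apply: subtree_insr Ha Hsub.
Qed.

End DerivationTrees.

Definition abcd_eqb (x y : abcd) : bool :=
  match x, y with La, La | Lb, Lb | Lc, Lc | Ld, Ld => true | _, _ => false end.

Lemma abcd_eqP : Equality.axiom abcd_eqb.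
Proof. by case; case; constructor. Qed.

HB.instance Definition _ := hasDecEq.Build abcd abcd_eqP.

Lemma count_map_Some x (w : seq abcd) : count_mem (Some x) (map Some w) = count_letter x w.
Proof. by elim: w => //= y w ->; case: x; case: y. Qed.

Lemma wlen_count (s : seq (letter1 abcd)) : wlen s =
  count_mem (Some La) s + count_mem (Some Lb) s + count_mem (Some Lc) s + count_mem (Some Ld) s.
Proof.
rewrite /wlen; elim: s => [|[[]|] s IH] //=; rewrite IH;
  by move: (count_mem _ s) (count_mem _ s) (count_mem _ s) (count_mem _ s) => *; lia.
Qed.

Lemma fourMIX_count_eq v x y : fourMIX v -> count_letter x v = count_letter y v.
Proof. by case=> [? [? ?]]; case: x; case: y; lia. Qed.

Section FourMixGrammar.
Variable G : dcfg1 abcd.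
Hypothesis G_fourMIX : forall w, lang G w <-> exists v, w = map Some v /\ fourMIX v.
Local Notation tm := (term (nt G) abcd).

Definition occurs_in_fourMIX (B : nt G) (g1 : tm) := exists g v,
  subtree (TNT (start G)) g B g1 /\ tvalue g = map Some v /\ fourMIX v.

(* Swapping the two subtrees yields a word of 4MIX again. *)
Lemma occurs_count_shift B g1 g2 (x y : abcd) :
  occurs_in_fourMIX B g1 -> occurs_in_fourMIX B g2 ->
  count_mem (Some x) (tvalue g1) + count_mem (Some y) (tvalue g2) =
  count_mem (Some y) (tvalue g1) + count_mem (Some x) (tvalue g2).
Proof.
move=> [g [v [Hsub [g_val v_mix]]]] [_ [_ [/subtree_expands [_ Hexp2] _]]].
have [g' Hexp' Hcount] := subtree_swap Hsub (correct1_TNT _) Hexp2.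
have : lang G (tvalue g').
  by exists g'; split; [exact: derivable_of_expands | split => //; exact: expands_ground Hexp'].
case/G_fourMIX => v' [g'_val v'_mix].
have count_z (z : abcd) : count_mem (Some z) (tvalue g') + count_mem (Some z) (tvalue g1) =
    count_mem (Some z) (tvalue g) + count_mem (Some z) (tvalue g2) := Hcount (pred1 (Some z)) isT.
have := count_z x; have := count_z y.
rewrite g_val g'_val !count_map_Some (fourMIX_count_eq x y v_mix) (fourMIX_count_eq x y v'_mix).
lia.
Qed.

Lemma occurs_count_bounded : exists K, forall B g1, occurs_in_fourMIX B g1 ->
  forall x y : abcd, count_mem (Some x) (tvalue g1) <= count_mem (Some y) (tvalue g1) + K.
Proof.
apply: (uniform_bound (P := fun B K => forall g1, occurs_in_fourMIX B g1 ->
  forall x y : abcd, count_mem (Some x) (tvalue g1) <= count_mem (Some y) (tvalue g1) + K)).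
  by move=> B k k' le_kk' Hk g1 Hg1 x y; apply: leq_trans (Hk g1 Hg1 x y) _; rewrite leq_add2l.
move=> B; have [[g Hg] | none] := classic (exists g, occurs_in_fourMIX B g); last first.
  by exists 0 => g1 Hg1; case: none; exists g1.
exists (wlen (tvalue g)) => g1 Hg1 x y.
have := occurs_count_shift x y Hg1 Hg; have := wlen_count (tvalue g).
by case: x; lia.
Qed.

End FourMixGrammar.

Definition word n : seq abcd :=
  nseq n La ++ nseq (3 * n) Lb ++ nseq n La ++ nseq (3 * n) Lc ++ nseq n La ++ nseq (3 * n) Ld.

Lemma size_word n : size (word n) = 12 * n.
Proof. by rewrite /word !size_cat !size_nseq; lia. Qed.

Lemma word_fourMIX n : fourMIX (word n).
Proof. by rewrite /fourMIX /count_letter /word !count_cat !count_nseq /=; lia. Qed.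

Definition block_start (x : abcd) : nat :=
  match x with La => 0 | Lb => 1 | Lc => 5 | Ld => 9 end.

Lemma nth_word_block n k x : x != La -> nth La (word n) k = x ->
  block_start x * n <= k < (block_start x + 3) * n.
Proof.
rewrite /word !nth_cat !size_nseq !nth_nseq.
by case: x => // _; repeat case: ifP => ?; try discriminate; move=> _ /=; lia.
Qed.

Lemma mem_factor_nth (w : seq abcd) p f s x : map Some w = p ++ f ++ s -> Some x \in f ->
  exists2 i, i < size f & nth La w (size p + i) = x.
Proof.
move=> w_eq /(nthP None) [i lt_i f_i]; exists i => //.
have lt_pi : size p + i < size w by rewrite -(size_map Some w) w_eq !size_cat ltn_add2l ltn_addr.
apply: Some_inj; rewrite -(nth_map La None) // w_eq nth_cat ltnNge leq_addr /=.
by rewrite addKn nth_cat lt_i.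
Qed.

(* Blocks of different letters among b, c, d are separated by a block a^n. *)
Lemma short_factor_word n p f s : map Some (word n) = p ++ f ++ s -> size f < n ->
  exists x0 : abcd, forall x : abcd, x != La -> x != x0 -> Some x \notin f.
Proof.
move=> w_eq short.
have [[y [yNa yf]] | none] := classic (exists y, y != La /\ Some y \in f); last first.
  by exists La => x xNa _; apply/negP => xf; apply: none; exists x.
exists y => x xNa xNy; apply/negP => xf.
have [i lt_i /(nth_word_block xNa) x_at] := mem_factor_nth w_eq xf.
have [j lt_j /(nth_word_block yNa) y_at] := mem_factor_nth w_eq yf.
by move: xNa yNa xNy x_at y_at {xf yf}; case: x; case: y => //= *; lia.
Qed.

Lemma short_factors_word_miss n p u q v r :
  map Some (word n) = p ++ u ++ q ++ v ++ r -> size u < n -> size v < n ->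
  exists2 z : abcd, z != La & Some z \notin u ++ v.
Proof.
move=> w_eq u_short v_short.
have [x0 u_x0] := short_factor_word w_eq u_short.
have [y0 v_y0] : exists y0 : abcd, forall y : abcd, y != La -> y != y0 -> Some y \notin v.
  by apply: (short_factor_word (p := p ++ u ++ q) (s := r)) v_short; rewrite w_eq -!catA.
have [z zNa [zNx0 zNy0]] : exists2 z : abcd, z != La & z != x0 /\ z != y0.
  by clear u_x0 v_y0; case: x0; case: y0; first [by exists Lb | by exists Lc | by exists Ld].
by exists z; rewrite // mem_cat negb_or u_x0 ?v_y0.
Qed.

Theorem theorem5 :
  ~ exists G : dcfg1 abcd,
      forall w : seq (letter1 abcd),
        lang G w <-> exists v : seq abcd, w = map Some v /\ fourMIX v.
Proof.
move=> [G G_fourMIX].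
have [K HK] := occurs_count_bounded G_fourMIX.
pose T := 4 * K; pose n := rules_word_size G + rules_nt_count G * T + T + 1.
have [g [Hder [g_gr g_val]]] : lang G (map Some (word n)).
  by apply/G_fourMIX; exists (word n); split => //; exact: word_fourMIX.
have [|B [g1 [Hsub /andP [long short]]]] := subtree_window (T := T) (expands_of_derivable Hder g_gr).
  by rewrite /= g_val wlen_map_Some size_word /n; lia.
have g1_occurs : occurs_in_fourMIX B g1.
  by exists g, (word n); split => //; split => //; exact: word_fourMIX.
have [u [v [p [q [r [g1_val [u_free [v_free g_eq]]]]]]]] := subtree_factor Hsub (correct1_TNT _).
have wlen_g1 : wlen (tvalue g1) = size u + size v.
  rewrite -(wlen_sepfree u_free) -(wlen_sepfree v_free).
  by case: g1_val => ->; rewrite /wlen !count_cat.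
have [u_short v_short] : size u < n /\ size v < n by rewrite /n; lia.
rewrite g_val in g_eq.
have [z zNa z_uv] := short_factors_word_miss g_eq u_short v_short.
have z_g1 : count_mem (Some z) (tvalue g1) = 0.
  by apply/count_memPn; move: z_uv; case: g1_val => ->; rewrite !mem_cat ?in_cons.
have count_le (x : abcd) : count_mem (Some x) (tvalue g1) <= K.
  by apply: leq_trans (HK B g1 g1_occurs x z) _; rewrite z_g1.
have := wlen_count (tvalue g1).
by have := count_le La; have := count_le Lb; have := count_le Lc; have := count_le Ld; lia.
Qed.
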